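(* Let $(U,\Phi)$ be a two-phase quantum walk with one defect with an initial state $\Phi\in\mathcal H_0$. Then $(U,\Phi)$ is unitary equivalent to $(U_{r,\mu},\Phi_{\alpha,\theta})$ for some $0\le r_\varepsilon,\alpha\le1$ ($\varepsilon=+,-,0$) and $\mu_i,\theta\in\mathbb R$ ($i=1,2,3$), where $\Phi_{\alpha,\theta}=\alpha e_1^0+e^{i\theta}\sqrt{1-\alpha^2}\,e_2^0$ and \begin{align*} U_{r,\mu}={}&|e_1^{-1}\rangle\langle r_0e_1^0+e^{i\mu_1}s_0e_2^0|+|e_2^{1}\rangle\langle -e^{i\mu_2}s_0e_1^0+e^{i(\mu_1+\mu_2)}r_0e_2^0|\\ &+\sum_{n\ge1}|e_1^{n-1}\rangle\langle r_+e_1^n+s_+e_2^n|+|e_2^{n+1}\rangle\langle -e^{i\mu_3}s_+e_1^n+e^{i\mu_3}r_+e_2^n|\\ &+\sum_{n\le-1}|e_1^{n-1}\rangle\langle r_-e_1^n+s_-e_2^n|+|e_2^{n+1}\rangle\langle -s_-e_1^n+r_-e_2^n|, \end{align*} with $s_\varepsilon=\sqrt{1-r_\varepsilon^2}$, $r=(r_+,r_-,r_0)$, $\mu=(\mu_1,\mu_2,\mu_3)$. Moreover, for $0<r_\varepsilon,r'_\varepsilon,\alpha,\alpha'<1$ and $\mu_i,\mu'_i,\theta,\theta'\in[0,2\pi)$, the pairs $(U_{r,\mu},\Phi_{\alpha,\theta})$ and $(U_{r',\mu'},\Phi_{\alpha',\theta'})$ are unitary equivalent if and only if $r=r'$, $\mu=\mu'$,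 $\alpha=\alpha'$ and $\theta=\theta'$.
   Context: Let $\mathcal H_n=\mathbb C^2$ for $n\in\mathbb Z$, $\mathcal H=\bigoplus_{n\in\mathbb Z}\mathcal H_n$, $P_n$ the orthogonal projection onto $\mathcal H_n$, and $\{e_1^n,e_2^n\}$ the standard basis of $\mathcal H_n$; each $\mathcal H_n$ is identified with $\mathbb C^2$. Dirac notation: $|x\rangle\langle y|$ is the operator $z\mapsto\langle y,z\rangle x$ (inner product conjugate-linear in the first argument). A one-dimensional quantum walk is a unitary $U$ on $\mathcal H$ with $\operatorname{rank}(P_nUP_m)=1$ if $m=n\pm1$ and $0$ otherwise. Every such $U$ can be written as $U=\sum_{n\in\mathbb Z}|\xi_{n-1,n}\rangle\langle\zeta_{n-1,n}|+|\xi_{n+1,n}\rangle\langle\zeta_{n+1,n}|$, where $\{\xi_{n,n+1},\xi_{n+1,n}\}_{n}$ and $\{\zeta_{n,n+1},\zeta_{n+1,n}\}_{n}$ are orthonormal bases of $\mathcal H$ with $\xi_{n,n+1},\zeta_{n+1,n}\in\mathcal H_n$ and $\xi_{n+1,n},\zeta_{n,n+1}\in\mathcal H_{n+1}$. $U$ is a two-phase quantum walk with one defect if it has such a representation for which there exist $\xi_1^\pm,\xi_2^\pm,\zeta_1^\pm,\zeta_2^\pm\in\mathbb C^2$ with $\xi_{n,n+1}=\xi_1^+$, $\xi_{n,n-1}=\xi_2^+$, $\zeta_{n-1,n}=\zeta_1^+$, $\zeta_{n+1,n}=\zeta_2^+$ for all $n\ge1$, and the same with superscript $-$ for all $n\le-1$.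 An initial state is a unit vector $\Phi\in\mathcal H_0$. Since a walk $U$ is identified with $e^{i\lambda}U$ and a state $\Phi$ with $e^{i\lambda}\Phi$ ($\lambda\in\mathbb R$), pairs $(U,\Phi)$ and $(U',\Phi')$ are called unitary equivalent if there exist $\lambda,\lambda'\in\mathbb R$ and a unitary $W=\bigoplus_nW_n$ ($W_n$ unitary on $\mathcal H_n$) with $e^{i\lambda}WUW^*=U'$ and $e^{i\lambda'}W\Phi=\Phi'$. *)

From HB Require Import structures.
From Stdlib Require Import Reals.
From mathcomp Require Import all_boot all_order all_algebra.
From mathcomp Require Import Rstruct.
From mathcomp Require Import complex.
Set Implicit Arguments. Unset Strict Implicit. Unset Printing Implicit Defensive.
Import Order.TTheory GRing.Theory Num.Theory.
Local Open Scope ring_scope.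
Local Open Scope complex_scope.

Definition Cx := (R : Type)[i].

Definition expi (t : R) : Cx := (cos t) +i* (sin t).

Definition adj m n (A : 'M[Cx]_(m, n)) : 'M[Cx]_(n, m) := map_mx (@conjc _) A^T.

(* vectors of H_n = Cx^2 are column vectors; standard basis e_1, e_2 *)
Definition e1 : 'cV[Cx]_2 := \col_i (if i == 0 then 1 else 0).
Definition e2 : 'cV[Cx]_2 := \col_i (if i == 0 then 0 else 1).

(* Dirac ket-bra |x><y| : z |-> <y,z> x, as a 2x2 matrix *)
Definition ketbra (x y : 'cV[Cx]_2) : 'M[Cx]_2 := x *m adj y.

(* A (banded) operator on H = (+)_{n in Z} Cx^2 is given by its blocks:
   B n m = P_n U P_m, viewed as a 2x2 matrix H_m -> H_n. *)
Definition blockop := int -> int -> 'M[Cx]_2.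

(* Because every block row/column has at most
   two nonzero blocks, U U^* = 1 and U^* U = 1 reduce to finite block sums. *)
Definition quantum_walk (U : blockop) : Prop :=
  (forall n m : int,
      \rank (U n m) = (if (m == n + 1) || (m == n - 1) then 1%N else 0%N)) /\
  (forall n k : int,
      \sum_(m <- [:: n - 1; n + 1]) U n m *m adj (U k m)
        = (if n == k then 1%:M else 0)) /\
  (forall m l : int,
      \sum_(n <- [:: m - 1; m + 1]) adj (U n m) *m U n l
        = (if m == l then 1%:M else 0)).

Definition onb2 (u v : 'cV[Cx]_2) : Prop :=
  adj u *m u = 1%:M /\ adj v *m v = 1%:M /\ adj u *m v = 0.

(* With
     xr n = xi_{n,n+1}, xl n = xi_{n,n-1}   (in H_n)
     zl n = zeta_{n-1,n}, zr n = zeta_{n+1,n} (in H_n)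
   U = sum_n |xi_{n-1,n}><zeta_{n-1,n}| + |xi_{n+1,n}><zeta_{n+1,n}|,
   i.e. P_n U P_{n+1} = |xr n><zl (n+1)| and P_n U P_{n-1} = |xl n><zr (n-1)|. *)
Definition two_phase_one_defect (U : blockop) : Prop :=
  quantum_walk U /\
  exists xr xl zl zr : int -> 'cV[Cx]_2,
    (forall n, onb2 (xr n) (xl n)) /\ (forall n, onb2 (zl n) (zr n)) /\
    (forall n m : int, U n m =
        if m == n + 1 then ketbra (xr n) (zl m)
        else if m == n - 1 then ketbra (xl n) (zr m)
        else 0) /\
    (exists xi1p xi2p zeta1p zeta2p : 'cV[Cx]_2,
      forall n : int, 1 <= n ->
        [/\ xr n = xi1p, xl n = xi2p, zl n = zeta1p & zr n = zeta2p]) /\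
    (exists xi1m xi2m zeta1m zeta2m : 'cV[Cx]_2,
      forall n : int, n <= -1 ->
        [/\ xr n = xi1m, xl n = xi2m, zl n = zeta1m & zr n = zeta2m]).

Definition unit_state (Phi : 'cV[Cx]_2) : Prop := adj Phi *m Phi = 1%:M.

Definition unitary2 (W : 'M[Cx]_2) : Prop :=
  W *m adj W = 1%:M /\ adj W *m W = 1%:M.

Definition unitary_equiv (U : blockop) (Phi : 'cV[Cx]_2)
    (U' : blockop) (Phi' : 'cV[Cx]_2) : Prop :=
  exists (lam lam' : R) (W : int -> 'M[Cx]_2),
    (forall n, unitary2 (W n)) /\
    (forall n m : int, expi lam *: (W n *m U n m *m adj (W m)) = U' n m) /\
    expi lam' *: (W 0 *m Phi) = Phi'.

Definition sq (r : R) : Cx := (Num.sqrt (1 - r ^+ 2))%:C.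

Definition Phi_at (alpha theta : R) : 'cV[Cx]_2 :=
  alpha%:C *: e1 + (expi theta * sq alpha) *: e2.

(* the bra vector (in H_m) of the block P_{m-1} U P_m of U_{r,mu} *)
Definition zeta_left (rp rm r0 mu1 : R) (m : int) : 'cV[Cx]_2 :=
  if 1 <= m then rp%:C *: e1 + sq rp *: e2
  else if m == 0 then r0%:C *: e1 + (expi mu1 * sq r0) *: e2
  else rm%:C *: e1 + sq rm *: e2.

(* the bra vector (in H_m) of the block P_{m+1} U P_m of U_{r,mu} *)
Definition zeta_right (rp rm r0 mu1 mu2 mu3 : R) (m : int) : 'cV[Cx]_2 :=
  if 1 <= m then (- (expi mu3 * sq rp)) *: e1 + (expi mu3 * rp%:C) *: e2
  else if m == 0 then (- (expi mu2 * sq r0)) *: e1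
                      + (expi (mu1 + mu2) * r0%:C) *: e2
  else (- sq rm) *: e1 + rm%:C *: e2.

(* U_{r,mu} with r = (rp, rm, r0) = (r_+, r_-, r_0), mu = (mu1, mu2, mu3):
   P_{n} U P_{n+1} = |e_1><zeta_left (n+1)|, P_n U P_{n-1} = |e_2><zeta_right (n-1)| *)
Definition U_std (rp rm r0 mu1 mu2 mu3 : R) : blockop :=
  fun n m =>
    if m == n + 1 then ketbra e1 (zeta_left rp rm r0 mu1 m)
    else if m == n - 1 then ketbra e2 (zeta_right rp rm r0 mu1 mu2 mu3 m)
    else 0.

(* A two-phase walk with one defect is given at each site n by two orthonormal
   frames of C^2, and the transition between them is a U(2) matrix described by
   a radius r_n and three phases; all of these are constant on each of the
   regions n >= 1, n = 0 and n <= -1.  Conjugating by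
   W_n = diag(e^{i p_n}, e^{i q_n}) X_n^*, with X_n the frame of the ket
   vectors, and choosing p, q and a global phase recursively along Z removes
   every phase except mu_1, mu_2, mu_3, which gives U_{r,mu}; the initial state
   is normalised by the global phase of the state.
   Conversely, both blocks of a standard walk have range C e_1 or C e_2, so a
   unitary equivalence W between two standard walks is diagonal, and the
   positivity of the radii forces W_n = a_n I with a_{n+1} = e^{i lam} a_n and
   e^{2 i lam} = 1.  Such a W acts trivially, so the two walks coincide and
   their parameters agree. *)

From HB Require Import structures.
From Stdlib Require Import Reals.
From mathcomp Require Import all_boot all_order all_algebra.
From mathcomp Require Import Rstruct complex.
From mathcomp Require Import ring lra zify.
Set Implicit Arguments.
Unset Strict Implicit.
Unset Printing Implicit Defensive.
Import Order.TTheory GRing.Theory Num.Theory.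
Local Open Scope ring_scope.
Local Open Scope complex_scope.

Lemma conjc_realC (r : R) : conjc r%:C = r%:C :> Cx.
Proof. exact: conjc_real. Qed.

Lemma conjcD (y z : Cx) : conjc (y + z) = conjc y + conjc z.
Proof. exact: rmorphD. Qed.

Lemma conjcN (z : Cx) : conjc (- z) = - conjc z.
Proof. exact: rmorphN. Qed.

Lemma conjcM (y z : Cx) : conjc (y * z) = conjc y * conjc z.
Proof. exact: rmorphM. Qed.

Definition unimodular (z : Cx) := z * conjc z = 1.

Lemma unimodular_neq0 z : unimodular z -> z != 0.
Proof. by rewrite /unimodular; apply: contra_eqN => /eqP->; rewrite mul0r eq_sym oner_eq0. Qed.

Lemma unimodularM y z : unimodular y -> unimodular z -> unimodular (y * z).
Proof. by rewrite /unimodular conjcM mulrACA => -> ->; rewrite mulr1. Qed.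

Lemma unimodularJ z : unimodular z -> unimodular (conjc z).
Proof. by rewrite /unimodular conjcK mulrC. Qed.

Lemma unimodular_conj_eq y z : unimodular z -> y * conjc z = 1 -> y = z.
Proof. by move=> hz hy; rewrite -[y]mulr1 -hz mulrCA hy mulr1. Qed.

Lemma realC_neq0 (r : R) : r != 0 -> r%:C != 0 :> Cx.
Proof. by apply: contraNneq => -[->]. Qed.

Lemma unimodular_mul_pos (g : Cx) (r r' : R) : unimodular g -> 0 < r -> 0 < r' ->
  g * r%:C = r'%:C -> g = 1 /\ r = r'.
Proof.
move=> hg hr hr' h.
have hgq : g = (r' / r)%:C.
  by rewrite rmorphM /= fmorphV /= -h mulfK // realC_neq0 // gt_eqF.
have q1 : r' / r = 1.
  have : (r' / r) * (r' / r) = 1.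
    by move: hg; rewrite /unimodular hgq conjc_realC -rmorphM /= => -[].
  have : 0 < r' / r by rewrite divr_gt0.
  nra.
split; first by rewrite hgq q1.
by rewrite -[r'](divfK (lt0r_neq0 hr)) q1 mul1r.
Qed.

Lemma expiD a b : expi (a + b) = expi a * expi b.
Proof.
rewrite /expi cosD sinD; simpc.
by congr (_ +i* _); rewrite addrC.
Qed.

Lemma expi0 : expi 0 = 1.
Proof. by rewrite /expi cos_0 sin_0. Qed.

Lemma expiN a : expi (- a) = conjc (expi a).
Proof. by rewrite /expi cos_neg sin_neg. Qed.

Lemma expi_unimodular a : unimodular (expi a).
Proof. by rewrite /unimodular -expiN -expiD RplusE RoppE addrN expi0. Qed.

Lemma expi_neq0 a : expi a != 0.
Proof. exact/unimodular_neq0/expi_unimodular. Qed.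

Lemma expi_rotate (a b c d : R) : b + c - a = d ->
  forall z, expi (- a) * (expi b * (z * expi c)) = z * expi d.
Proof. by move=> <- z; rewrite !expiD; ring. Qed.

Lemma expi_inj (a b : R) : 0 <= a < 2 * PI -> 0 <= b < 2 * PI ->
  expi a = expi b -> a = b.
Proof.
move=> /andP[a0 a2] /andP[b0 b2] eab.
have /eqP : expi (a - b) = 1 by rewrite expiD expiN -eab expi_unimodular.
rewrite eq_complex /= => /andP[/eqP cos1 /eqP sin0].
have [k kE] := sin_eq_0_0 _ sin0.
have pi_gt0 : 0 < PI by apply/RltP/PI_RGT_0.
have kPI : a - b = IZR k * PI by exact: kE.
have two : 2 = IZR 2 by rewrite -INRE INR_IZR_INZ.
have /RltP/lt_IZR k_lt : IZR k < IZR 2 by rewrite -two; nra.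
have /RltP k_gt : - IZR 2 < IZR k by rewrite -two; nra.
rewrite -RoppE -opp_IZR in k_gt; move/lt_IZR: k_gt => k_gt.
have [k0 | k1] : k = Z0 \/ k = Zpos xH \/ k = Zneg xH by lia.
  by apply/eqP; rewrite -subr_eq0 kPI k0 mul0r.
move: cos1; rewrite RminusE kPI.
(* [cos_PI] is stated with Stdlib's literal [-1], hence the conversion. *)
by case: k1 => ->; rewrite ?mulN1r ?cos_neg ?mul1r cos_PI => h;
  have : -1 = 1 :> R := h; lra.
Qed.

Lemma polar_form (z : Cx) : exists (r t : R), 0 <= r /\ z = r%:C * expi t.
Proof.
case: z => x y.
pose n : R := Num.sqrt (x ^+ 2 + y ^+ 2).
have n_ge0 : 0 <= n by exact: sqrtr_ge0.
have n2 : n ^+ 2 = x ^+ 2 + y ^+ 2 by rewrite sqr_sqrtr // addr_ge0 // sqr_ge0.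
have [n0 | n_neq0] := eqVneq n 0.
  exists 0, 0; split => //.
  have /eqP : x ^+ 2 + y ^+ 2 = 0 by rewrite -n2 n0 expr0n.
  by rewrite mul0r paddr_eq0 ?sqr_ge0 // !sqrf_eq0 => /andP[/eqP-> /eqP->].
have n_gt0 : 0 < n by rewrite lt_def n_neq0.
pose c := x / n.
have c2 : 1 - c ^+ 2 = (`|y| / n) ^+ 2.
  rewrite /c !expr_div_n real_normK ?num_real // -[1](divff (expf_neq0 2 n_neq0)).
  by rewrite -mulrBl n2 addrAC subrr add0r.
have c_bound : Rle (-1) c /\ Rle c 1.
  have : c ^+ 2 <= 1 by rewrite -subr_ge0 c2 sqr_ge0.
  move=> c2_le1; have c_ge : -1 <= c by nra.
  have c_le : c <= 1 by nra.
  by split; apply/RleP; [exact: c_ge | exact: c_le].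
have sin_acos_c : sin (acos c) = `|y| / n.
  by rewrite sin_acos // RsqrtE /Rsqr RminusE RmultE -expr2 c2 sqrtr_sqr ger0_norm ?divr_ge0.
exists n, (if 0 <= y then acos c else - acos c); split => //.
rewrite /expi; case: ifP => y0; rewrite ?cos_neg ?sin_neg cos_acos // sin_acos_c;
  [rewrite ger0_norm // | rewrite ltr0_norm ?ltNge ?y0 //]; simpc;
  by congr (_ +i* _); rewrite /c ?RoppE; field.
Qed.

Lemma polar_mul_conj (r t : R) : (r%:C * expi t) * conjc (r%:C * expi t) = (r ^+ 2)%:C.
Proof. by rewrite conjcM conjc_realC mulrACA expi_unimodular mulr1 -rmorphM. Qed.

Lemma unimodular_expi (z : Cx) : unimodular z -> exists t, z = expi t.
Proof.
have [r [t [r_ge0 ->]]] := polar_form z.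
rewrite /unimodular polar_mul_conj => -[r2].
have -> : r = 1 by nra.
by exists t; rewrite mul1r.
Qed.

Lemma sq_pythagoras (ra rb : R) : 0 <= rb -> ra ^+ 2 + rb ^+ 2 = 1 -> sq ra = rb%:C.
Proof.
by move=> rb_ge0 r1; rewrite /sq -r1 addrAC subrr add0r sqrtr_sqr ger0_norm.
Qed.

Lemma pythagoras_le1 (ra rb : R) : 0 <= ra -> ra ^+ 2 + rb ^+ 2 = 1 -> 0 <= ra <= 1.
Proof. by move=> ra_ge0 r1; apply/andP; split => //; nra. Qed.

Lemma sq_gt0 (r : R) : 0 < r < 1 -> 0 < Num.sqrt (1 - r ^+ 2).
Proof. by case/andP => r_gt0 r_lt1; rewrite sqrtr_gt0; nra. Qed.

Lemma sq_neq0 (r : R) : 0 < r < 1 -> sq r != 0.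
Proof. by move/sq_gt0/lt0r_neq0; apply: realC_neq0. Qed.

Definition mx2 (a b c d : Cx) : 'M[Cx]_2 :=
  \matrix_(i, j) if i == 0 then (if j == 0 then a else b)
                 else (if j == 0 then c else d).

Definition col2 (a b : Cx) : 'cV[Cx]_2 := \col_i (if i == 0 then a else b).

Lemma ord2P (i : 'I_2) : i = 0 \/ i = 1.
Proof. by case: i => [[|[|//]] ?]; [left | right]; apply: val_inj. Qed.

Ltac mx2_ext :=
  apply/matrixP; let i := fresh "i" in let j := fresh "j" in move=> i j;
  rewrite ?mxE; case: (ord2P i) => ->;
  first [case: (ord2P j) => -> | rewrite [j]ord1 | idtac].

Lemma mx2E (A : 'M[Cx]_2) : A = mx2 (A 0 0) (A 0 1) (A 1 0) (A 1 1).
Proof. by mx2_ext. Qed.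

Lemma col2E (v : 'cV[Cx]_2) : v = col2 (v 0 0) (v 1 0).
Proof. by mx2_ext. Qed.

Lemma mx2_inj a b c d a' b' c' d' :
  mx2 a b c d = mx2 a' b' c' d' -> [/\ a = a', b = b', c = c' & d = d'].
Proof.
move/matrixP=> E.
by split; [move: (E 0 0) | move: (E 0 1) | move: (E 1 0) | move: (E 1 1)]; rewrite !mxE.
Qed.

Lemma col2_inj a b a' b' : col2 a b = col2 a' b' -> a = a' /\ b = b'.
Proof. by move/matrixP=> E; split; [move: (E 0 0) | move: (E 1 0)]; rewrite !mxE. Qed.

Lemma mulmx2 a b c d a' b' c' d' :
  mx2 a b c d *m mx2 a' b' c' d' =
  mx2 (a * a' + b * c') (a * b' + b * d') (c * a' + d * c') (c * b' + d * d').
Proof. by mx2_ext; rewrite !big_ord_recl big_ord0 !mxE /= addr0. Qed.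

Lemma mulmx2_col2 a b c d x y :
  mx2 a b c d *m col2 x y = col2 (a * x + b * y) (c * x + d * y).
Proof. by mx2_ext; rewrite !big_ord_recl big_ord0 !mxE /= addr0. Qed.

Lemma adj_mx2 a b c d :
  adj (mx2 a b c d) = mx2 (conjc a) (conjc c) (conjc b) (conjc d).
Proof. by mx2_ext. Qed.

Lemma scalar_mx2 a : a%:M = mx2 a 0 0 a.
Proof. by mx2_ext. Qed.

Lemma scale_col2 k a b : k *: col2 a b = col2 (k * a) (k * b).
Proof. by mx2_ext. Qed.

Lemma add_col2 a b c d : col2 a b + col2 c d = col2 (a + c) (b + d).
Proof. by mx2_ext. Qed.

Lemma e1E : e1 = col2 1 0. Proof. by mx2_ext. Qed.
Lemma e2E : e2 = col2 0 1. Proof. by mx2_ext. Qed.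

Lemma col2_neq0 a b : (a != 0) || (b != 0) -> col2 a b != 0.
Proof.
apply: contraTneq => /matrixP ab0; move: (ab0 0 0) (ab0 1 0).
by rewrite !mxE /= => -> ->; rewrite eqxx.
Qed.

Lemma e1_neq0 : e1 != 0. Proof. by rewrite e1E col2_neq0 ?oner_eq0. Qed.
Lemma e2_neq0 : e2 != 0. Proof. by rewrite e2E col2_neq0 ?oner_eq0 ?orbT. Qed.

Lemma mulmx_e1 (A : 'M[Cx]_2) : A *m e1 = col2 (A 0 0) (A 1 0).
Proof. by rewrite {1}[A]mx2E e1E mulmx2_col2 !mulr1 !mulr0 !addr0. Qed.

Lemma mulmx_e2 (A : 'M[Cx]_2) : A *m e2 = col2 (A 0 1) (A 1 1).
Proof. by rewrite {1}[A]mx2E e2E mulmx2_col2 !mulr1 !mulr0 !add0r. Qed.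

Lemma diag_mulmx_e1 a b : mx2 a 0 0 b *m e1 = a *: e1.
Proof. by rewrite e1E mulmx2_col2 scale_col2 !(mulr0, mulr1, mul0r, addr0). Qed.

Lemma diag_mulmx_e2 a b : mx2 a 0 0 b *m e2 = b *: e2.
Proof. by rewrite e2E mulmx2_col2 scale_col2 !(mulr0, mulr1, mul0r, add0r). Qed.

Lemma adjM m n p (A : 'M[Cx]_(m, n)) (B : 'M[Cx]_(n, p)) :
  adj (A *m B) = adj B *m adj A.
Proof. by rewrite /adj trmx_mul map_mxM. Qed.

Lemma adjK m n (A : 'M[Cx]_(m, n)) : adj (adj A) = A.
Proof. by apply/matrixP => i j; rewrite !mxE conjcK. Qed.

Lemma adjZ m n k (A : 'M[Cx]_(m, n)) : adj (k *: A) = conjc k *: adj A.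
Proof. by apply/matrixP => i j; rewrite !mxE conjcM. Qed.

Lemma adj_scalar (a : Cx) : adj (a%:M : 'M_2) = (conjc a)%:M.
Proof. by rewrite !scalar_mx2 adj_mx2 conjc0. Qed.

Lemma unitary2M (A B : 'M[Cx]_2) : unitary2 A -> unitary2 B -> unitary2 (A *m B).
Proof.
move=> [AA' A'A] [BB' B'B]; rewrite /unitary2 adjM; split.
  by rewrite mulmxA -(mulmxA A) BB' mulmx1 AA'.
by rewrite mulmxA -(mulmxA _ (adj A)) A'A mulmx1 B'B.
Qed.

Lemma unitary2_adj (A : 'M[Cx]_2) : unitary2 A -> unitary2 (adj A).
Proof. by rewrite /unitary2 adjK => -[]. Qed.

Lemma unitary2_diag p q : unitary2 (mx2 (expi p) 0 0 (expi q)).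
Proof.
have pp : expi p * conjc (expi p) = 1 := expi_unimodular p.
have qq : expi q * conjc (expi q) = 1 := expi_unimodular q.
rewrite /unitary2 adj_mx2 !mulmx2 scalar_mx2 conjc0 !(mul0r, mulr0, addr0, add0r).
by rewrite pp qq [conjc _ * expi p]mulrC [conjc _ * expi q]mulrC pp qq.
Qed.

Lemma unitary2_mulmx_neq0 (A : 'M[Cx]_2) (z : 'cV[Cx]_2) :
  unitary2 A -> z != 0 -> A *m z != 0.
Proof.
move=> [_ AA]; apply: contraNneq => Az0.
by rewrite -[z]mul1mx -AA -mulmxA Az0 mulmx0.
Qed.

(** * Inner products and orthonormal bases *)

Definition inner (u v : 'cV[Cx]_2) : Cx :=
  conjc (u 0 0) * v 0 0 + conjc (u 1 0) * v 1 0.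

Lemma adj_mulmx (u v : 'cV[Cx]_2) : adj u *m v = (inner u v)%:M.
Proof.
rewrite {1}[u]col2E {1}[v]col2E; apply/matrixP => i j.
by rewrite (ord1 i) (ord1 j) !mxE !big_ord_recl big_ord0 !mxE /= mulr1n addr0.
Qed.

Lemma scalar1_inj (a b : Cx) : (a%:M : 'M_1) = b%:M -> a = b.
Proof. by move/matrixP/(_ 0 0); rewrite !mxE. Qed.

Lemma inner_conj u v : inner v u = conjc (inner u v).
Proof. by rewrite /inner conjcD !conjcM !conjcK mulrC [conjc (v 1 0) * _]mulrC. Qed.

Lemma inner_eq0 (y : 'cV[Cx]_2) : inner y y = 0 -> y = 0.
Proof.
rewrite /inner mulrC [conjc _ * _]mulrC => /eqP.
rewrite paddr_eq0 ?mulcJ_ge0 // !mulf_eq0 !conjc_eq0 !orbb => /andP[/eqP y0 /eqP y1].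
by rewrite [y]col2E y0 y1; mx2_ext.
Qed.

Lemma onb2_inner u v : onb2 u v -> [/\ inner u u = 1, inner v v = 1 & inner u v = 0].
Proof.
rewrite /onb2 !adj_mulmx => -[/matrixP/(_ 0 0) uu [/matrixP/(_ 0 0) vv /matrixP/(_ 0 0) uv]].
by move: uu vv uv; rewrite !mxE /= !mulr1n.
Qed.

Lemma inner_unitary (A : 'M[Cx]_2) u v : adj A *m A = 1%:M ->
  inner (A *m u) (A *m v) = inner u v.
Proof.
move=> AA; apply: scalar1_inj; rewrite -!adj_mulmx adjM.
by rewrite -mulmxA (mulmxA (adj A)) AA mul1mx.
Qed.

Definition frame (x1 x2 : 'cV[Cx]_2) : 'M[Cx]_2 :=
  mx2 (x1 0 0) (x2 0 0) (x1 1 0) (x2 1 0).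

Lemma adj_frame_mulmx x1 x2 v :
  adj (frame x1 x2) *m v = col2 (inner x1 v) (inner x2 v).
Proof. by rewrite adj_mx2 {1}[v]col2E mulmx2_col2. Qed.

Lemma onb2_frame x1 x2 : onb2 x1 x2 -> unitary2 (frame x1 x2).
Proof.
move=> /onb2_inner [h11 h22 h12].
have h21 : inner x2 x1 = 0 by rewrite inner_conj h12 conjc0.
have FF : adj (frame x1 x2) *m frame x1 x2 = 1%:M.
  by move: h11 h22 h12 h21; rewrite /frame adj_mx2 mulmx2 scalar_mx2 /inner => -> -> -> ->.
by split; first exact: mulmx1C.
Qed.

Lemma onb2_parseval x1 x2 : onb2 x1 x2 -> forall u v,
  inner u v = conjc (inner x1 u) * inner x1 v + conjc (inner x2 u) * inner x2 v.
Proof.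
move=> /onb2_frame [FF _] u v.
rewrite -(@inner_unitary (adj (frame x1 x2))) ?adjK // !adj_frame_mulmx.
by rewrite /inner !mxE.
Qed.

Lemma onb2_transition x1 x2 z1 z2 : onb2 x1 x2 -> onb2 z1 z2 ->
  let a := inner x1 z1 in let b := inner x2 z1 in
  exists d, [/\ unimodular d, conjc a * a + conjc b * b = 1,
    inner x1 z2 = - (d * conjc b) & inner x2 z2 = d * conjc a].
Proof.
move=> hx hz a b; set c := inner x1 z2; set e := inner x2 z2.
have /onb2_inner [_ x22 x12] := hx; have /onb2_inner [z11 z22 z12] := hz.
have ab1 : conjc a * a + conjc b * b = 1 by rewrite -(onb2_parseval hx) z11.
have ce1 : conjc c * c + conjc e * e = 1 by rewrite -(onb2_parseval hx) z22.
have ace0 : conjc a * c + conjc b * e = 0 by rewrite -(onb2_parseval hx) z12.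
have be1 : b * conjc b + e * conjc e = 1.
  by rewrite -x22 (onb2_parseval hz x2 x2) !(inner_conj x2) !conjcK.
have bace0 : conjc b * a + conjc e * c = 0.
  have x21 : inner x2 x1 = 0 by rewrite inner_conj x12 conjc0.
  rewrite -[LHS]conjcK -[0]conjc0 -x21 (onb2_parseval hz x2 x1).
  rewrite (inner_conj x2 z1) (inner_conj x1 z1) (inner_conj x2 z2) (inner_conj x1 z2).
  by rewrite conjcD !conjcM !conjcK.
(* [d] is the determinant of the transition matrix. *)
pose d := a * e - c * b.
have eE : e = d * conjc a.
  transitivity (e * (conjc a * a + conjc b * b) - b * (conjc a * c + conjc b * e)).
    by rewrite ab1 ace0; ring.
  by rewrite /d; ring.
have cE : c = - (d * conjc b).
  transitivity (c * (b * conjc b + e * conjc e) - e * (conjc b * a + conjc e * c)).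
    by rewrite be1 bace0; ring.
  by rewrite /d; ring.
exists d; split => //.
rewrite /unimodular -ce1 cE eE !conjcN !conjcM !conjcK.
by rewrite -[LHS]mulr1 -ab1; ring.
Qed.

Lemma onb2_transition_polar x1 x2 z1 z2 : onb2 x1 x2 -> onb2 z1 z2 ->
  exists ra rb ta tb td : R,
  [/\ 0 <= ra, 0 <= rb, ra ^+ 2 + rb ^+ 2 = 1,
      inner x1 z1 = ra%:C * expi ta /\ inner x2 z1 = rb%:C * expi tb &
      inner x1 z2 = - (rb%:C * expi (td - tb)) /\
      inner x2 z2 = ra%:C * expi (td - ta)].
Proof.
move=> hx hz; have [d [/unimodular_expi[td ->] ab1 -> ->]] := onb2_transition hx hz.
have [ra [ta [ra_ge0 aE]]] := polar_form (inner x1 z1).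
have [rb [tb [rb_ge0 bE]]] := polar_form (inner x2 z1).
exists ra, rb, ta, tb, td; split => //.
  move: ab1; rewrite mulrC [_ * inner x2 z1]mulrC aE bE !polar_mul_conj.
  by rewrite -rmorphD => -[].
by rewrite aE bE !conjcM !conjc_realC -!expiN !expiD; split; ring.
Qed.

Lemma ketbra_mulmx (A B : 'M[Cx]_2) x z :
  A *m ketbra x z *m adj B = ketbra (A *m x) (B *m z).
Proof. by rewrite /ketbra adjM !mulmxA. Qed.

Lemma scale_ketbra k x z : k *: ketbra x z = ketbra x (conjc k *: z).
Proof. by rewrite /ketbra adjZ conjcK scalemxAr. Qed.

Lemma ketbraZl k x z : ketbra (k *: x) z = ketbra x (conjc k *: z).
Proof. by rewrite -scale_ketbra /ketbra scalemxAl. Qed.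

Lemma ketbra_mulmx_r x y z : ketbra x y *m z = inner y z *: x.
Proof. by rewrite /ketbra -mulmxA adj_mulmx mul_mx_scalar. Qed.

Lemma ketbra_injr x y y' : x != 0 -> ketbra x y = ketbra x y' -> y = y'.
Proof.
move=> x_neq0 /(congr1 (fun M => adj x *m M)); rewrite /ketbra !mulmxA adj_mulmx.
rewrite !mul_scalar_mx => /scalerI eq_adj.
by rewrite -[y]adjK eq_adj ?adjK //; apply: contra x_neq0 => /eqP/inner_eq0->.
Qed.

Lemma ketbra_colinear x y x' y' : ketbra x y = ketbra x' y' ->
  inner y y *: x = inner y' y *: x'.
Proof. by move/(congr1 (mulmx^~ y)); rewrite !ketbra_mulmx_r. Qed.

Lemma ketbra_support x y x' y' i : ketbra x y = ketbra x' y' -> y != 0 ->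
  x' i 0 = 0 -> x i 0 = 0.
Proof.
move=> /ketbra_colinear/matrixP/(_ i 0); rewrite !mxE => xx' y_neq0 x'i.
move: xx'; rewrite x'i mulr0 => /eqP; rewrite mulf_eq0 => /orP[/eqP/inner_eq0 y0|/eqP//].
by rewrite y0 eqxx in y_neq0.
Qed.

Lemma ketbra_transport (A : 'M[Cx]_2) x y a : A *m x = a *: y ->
  forall B z k, k *: (A *m ketbra x z *m adj B) = ketbra y (conjc (a * k) *: (B *m z)).
Proof.
move=> Ax B z k; rewrite ketbra_mulmx Ax ketbraZl scale_ketbra scalerA.
by rewrite conjcM mulrC.
Qed.

(** * The three regions of the line *)

Definition by_region {T} (n : int) (tp t0 tm : T) : T :=
  if 1 <= n then tp else if n == 0 then t0 else tm.

Definition regional {T} (f : int -> T) :=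
  forall n, f n = by_region n (f 1) (f 0) (f (-1)).

Lemma by_region_pos {T} n (tp t0 tm : T) : 1 <= n -> by_region n tp t0 tm = tp.
Proof. by rewrite /by_region => ->. Qed.

Lemma by_region_neg {T} n (tp t0 tm : T) : n <= -1 -> by_region n tp t0 tm = tm.
Proof. by move=> n_neg; rewrite /by_region ifF ?ifF //; lia. Qed.

Lemma by_regionP {T} (P : T -> Prop) n a b c :
  P a -> P b -> P c -> P (by_region n a b c).
Proof. by rewrite /by_region; case: ifP => _; [|case: ifP => _]. Qed.

Lemma int_regionP (n : int) : [\/ 1 <= n, n = 0 | n <= -1].
Proof.
have [|n_lt1] := leP 1 n; first by constructor 1.
by have [|] := eqVneq n 0; [constructor 2 | constructor 3; lia].
Qed.

Lemma regional_constant {T} (f : int -> T) :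
  (exists a, forall n, 1 <= n -> f n = a) ->
  (exists b, forall n, n <= -1 -> f n = b) -> regional f.
Proof.
move=> [a fp] [b fm] n; case: (int_regionP n) => [n_pos | -> // | n_neg].
  by rewrite by_region_pos // !fp.
by rewrite by_region_neg // !fm.
Qed.

Lemma regional_by_region {T} (a b c : T) : regional (fun n => by_region n a b c).
Proof. by move=> n; rewrite /by_region /=. Qed.

Lemma regional_transition_polar (x1 x2 z1 z2 : int -> 'cV[Cx]_2) :
  (forall n, onb2 (x1 n) (x2 n)) -> (forall n, onb2 (z1 n) (z2 n)) ->
  regional x1 -> regional x2 -> regional z1 -> regional z2 ->
  exists ra rb ta tb td : int -> R,
  [/\ regional ra, regional tb, regional td & forall n,
    [/\ 0 <= ra n, 0 <= rb n, ra n ^+ 2 + rb n ^+ 2 = 1,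
        inner (x1 n) (z1 n) = (ra n)%:C * expi (ta n) /\
        inner (x2 n) (z1 n) = (rb n)%:C * expi (tb n) &
        inner (x1 n) (z2 n) = - ((rb n)%:C * expi (td n - tb n)) /\
        inner (x2 n) (z2 n) = (ra n)%:C * expi (td n - ta n)]].
Proof.
move=> hx hz rx1 rx2 rz1 rz2.
have [rap [rbp [tap [tbp [tdp Hp]]]]] := onb2_transition_polar (hx 1) (hz 1).
have [ra0 [rb0 [ta0 [tb0 [td0 H0]]]]] := onb2_transition_polar (hx 0) (hz 0).
have [ram [rbm [tam [tbm [tdm Hm]]]]] := onb2_transition_polar (hx (-1)) (hz (-1)).
exists (fun n => by_region n rap ra0 ram), (fun n => by_region n rbp rb0 rbm),
  (fun n => by_region n tap ta0 tam), (fun n => by_region n tbp tb0 tbm),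
  (fun n => by_region n tdp td0 tdm).
split; try exact: regional_by_region.
move=> n; rewrite (rx1 n) (rx2 n) (rz1 n) (rz2 n) /by_region.
by case: ifP => _; [|case: ifP => _].
Qed.

Lemma int_primitive (f : int -> R) :
  exists P : int -> R, forall n, P (n + 1) = P n + f (n + 1).
Proof.
exists (fun n => match n with
  | Posz k => \sum_(i < k) f i.+1%:Z
  | Negz k => - \sum_(i < k.+1) f (- i%:Z) end).
case=> [k | [|k]].
- have -> : Posz k + 1 = Posz k.+1 by lia.
  by rewrite big_ord_recr.
- have -> : Negz 0 + 1 = 0 by [].
  by rewrite /= big_ord1 big_ord0 oppr0 addNr.
- have -> : Negz k.+1 + 1 = Negz k by lia.
  by rewrite [in RHS]big_ord_recr /= NegzE opprD addrNK.
Qed.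

Lemma gauge_phases (ta tb td : int -> R) : regional tb -> regional td ->
  exists (p q : int -> R) (lam mu1 mu2 mu3 : R),
  [/\ forall n, p (n + 1) + ta (n + 1) - (p n + lam) = 0,
      forall n, q (n + 1) + tb (n + 1) - (p n + lam) = by_region (n + 1) 0 mu1 0,
      forall n, p n + (td n - tb n) - (q (n + 1) + lam) = by_region n mu3 mu2 0 &
      forall n, q n + (td n - ta n) - (q (n + 1) + lam) = by_region n mu3 (mu1 + mu2) 0].
Proof.
move=> reg_tb reg_td.
(* [lam] absorbs the phase on the left region, [p] integrates the first
   condition and [q] is then forced by the second. *)
pose lam := td (-1) / 2; have [p pS] := int_primitive (fun n => lam - ta n).
pose mu1 := tb 0 - tb (-1); pose mu2 := td 0 + tb 1 - tb 0 - 2 * lam.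
pose mu3 := td 1 - 2 * lam; pose chi n := by_region n 0 mu1 0.
pose q n := p n + ta n - tb n + chi n.
have pS' n : p (n + 1) + ta (n + 1) = p n + lam by rewrite pS; ring.
have qS n : q (n + 1) + lam = p n + 2 * lam - tb (n + 1) + chi (n + 1).
  by rewrite /q pS; ring.
have right_phase n : p n + (td n - tb n) - (q (n + 1) + lam) = by_region n mu3 mu2 0.
  rewrite qS (reg_tb n) (reg_td n) (reg_tb (n + 1)) /chi /mu1 /mu2 /mu3 /lam.
  case: (int_regionP n) => [n_pos | -> | n_neg].
  - have n1_pos : 1 <= n + 1 by lia.
    by rewrite !by_region_pos //; ring.
  - by rewrite /by_region /=; ring.
  have [-> | n_lt] := eqVneq n (-1); first by rewrite /by_region /=; field.
  have n1_neg : n + 1 <= -1 by lia.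
  by rewrite !by_region_neg //; field.
exists p, q, lam, mu1, mu2, mu3; split => // n.
- by rewrite pS'; ring.
- by rewrite /q /chi pS; ring.
have -> : q n + (td n - ta n) - (q (n + 1) + lam) =
          p n + (td n - tb n) - (q (n + 1) + lam) + chi n by rewrite /q; ring.
rewrite right_phase /chi.
case: (int_regionP n) => [n_pos | -> | n_neg]; last by rewrite !by_region_neg // addr0.
  by rewrite !by_region_pos // addr0.
by rewrite /by_region /= addrC.
Qed.

Lemma zeta_leftE rp rm r0 mu1 m : zeta_left rp rm r0 mu1 m =
  col2 (by_region m rp r0 rm)%:C
       (expi (by_region m 0 mu1 0) * sq (by_region m rp r0 rm)).
Proof.
rewrite /zeta_left /by_region e1E e2E.
by case: ifP => _; [|case: ifP => _]; rewrite !scale_col2 add_col2 ?expi0; congr col2; ring.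
Qed.

Lemma zeta_rightE rp rm r0 mu1 mu2 mu3 m : zeta_right rp rm r0 mu1 mu2 mu3 m =
  col2 (- (expi (by_region m mu3 mu2 0) * sq (by_region m rp r0 rm)))
       (expi (by_region m mu3 (mu1 + mu2) 0) * (by_region m rp r0 rm)%:C).
Proof.
rewrite /zeta_right /by_region e1E e2E.
by case: ifP => _; [|case: ifP => _]; rewrite !scale_col2 add_col2 ?expi0; congr col2; ring.
Qed.

Lemma zeta_left_neq0 rp rm r0 mu1 m : 0 < rp -> 0 < rm -> 0 < r0 ->
  zeta_left rp rm r0 mu1 m != 0.
Proof.
move=> rp_gt0 rm_gt0 r0_gt0; rewrite zeta_leftE col2_neq0 //.
apply/orP; left; apply: realC_neq0.
by rewrite /by_region; case: ifP => _; [|case: ifP => _]; rewrite lt0r_neq0.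
Qed.

Lemma zeta_right_neq0 rp rm r0 mu1 mu2 mu3 m : 0 < rp -> 0 < rm -> 0 < r0 ->
  zeta_right rp rm r0 mu1 mu2 mu3 m != 0.
Proof.
move=> rp_gt0 rm_gt0 r0_gt0; rewrite zeta_rightE col2_neq0 //.
apply/orP; right; rewrite mulf_neq0 ?expi_neq0 //; apply: realC_neq0.
by rewrite /by_region; case: ifP => _; [|case: ifP => _]; rewrite lt0r_neq0.
Qed.

Lemma U_std_left rp rm r0 mu1 mu2 mu3 n :
  U_std rp rm r0 mu1 mu2 mu3 n (n + 1) = ketbra e1 (zeta_left rp rm r0 mu1 (n + 1)).
Proof. by rewrite /U_std eqxx. Qed.

Lemma U_std_right rp rm r0 mu1 mu2 mu3 n :
  U_std rp rm r0 mu1 mu2 mu3 n (n - 1) =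
  ketbra e2 (zeta_right rp rm r0 mu1 mu2 mu3 (n - 1)).
Proof. by rewrite /U_std ifF ?eqxx //; lia. Qed.

(** * Reduction to the standard walk *)

Definition gauge (x1 x2 : 'cV[Cx]_2) (p q : R) : 'M[Cx]_2 :=
  mx2 (expi p) 0 0 (expi q) *m adj (frame x1 x2).

Lemma gauge_unitary x1 x2 p q : onb2 x1 x2 -> unitary2 (gauge x1 x2 p q).
Proof. by move=> /onb2_frame/unitary2_adj; apply: unitary2M; apply: unitary2_diag. Qed.

Lemma gauge_mulmx x1 x2 p q v :
  gauge x1 x2 p q *m v = col2 (expi p * inner x1 v) (expi q * inner x2 v).
Proof. by rewrite -mulmxA adj_frame_mulmx mulmx2_col2 !mul0r addr0 add0r. Qed.

Lemma gauge_frame x1 x2 p q : onb2 x1 x2 ->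
  gauge x1 x2 p q *m x1 = expi p *: e1 /\ gauge x1 x2 p q *m x2 = expi q *: e2.
Proof.
move=> /onb2_inner [h11 h22 h12]; have h21 : inner x2 x1 = 0.
  by rewrite inner_conj h12 conjc0.
by rewrite !gauge_mulmx h11 h22 h12 h21 e1E e2E !scale_col2 !mulr0 !mulr1.
Qed.

Lemma gauge_unit_state x1 x2 p q Phi : onb2 x1 x2 -> unit_state Phi ->
  exists lam' alpha theta,
    0 <= alpha <= 1 /\ expi lam' *: (gauge x1 x2 p q *m Phi) = Phi_at alpha theta.
Proof.
move=> hx; rewrite /unit_state adj_mulmx => /scalar1_inj.
rewrite (onb2_parseval hx) => ab1.
have [ra [ta [ra_ge0 aE]]] := polar_form (inner x1 Phi).
have [rb [tb [rb_ge0 bE]]] := polar_form (inner x2 Phi).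
have r1 : ra ^+ 2 + rb ^+ 2 = 1.
  move: ab1; rewrite mulrC [_ * inner x2 Phi]mulrC aE bE !polar_mul_conj.
  by rewrite -rmorphD => -[].
exists (- (p + ta)), ra, (q + tb - (p + ta)); split; first exact: pythagoras_le1 ra_ge0 r1.
rewrite gauge_mulmx aE bE scale_col2 /Phi_at e1E e2E !scale_col2 add_col2.
rewrite (sq_pythagoras rb_ge0 r1) !mulr0 mulr1 add0r addr0.
rewrite (expi_rotate (d := 0)) ?subrr // (expi_rotate (d := q + tb - (p + ta))) //.
by rewrite expi0 !mulr1 mulrC.
Qed.

Section Reduction.

Variables (U : blockop) (xr xl zl zr : int -> 'cV[Cx]_2) (ra rb ta tb td p q : int -> R).
Variables (lam mu1 mu2 mu3 : R).
Hypothesis hx : forall n, onb2 (xr n) (xl n).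
Hypothesis HU : forall n m, U n m =
  if m == n + 1 then ketbra (xr n) (zl m)
  else if m == n - 1 then ketbra (xl n) (zr m) else 0.
Hypothesis reg_ra : regional ra.
Hypothesis coin : forall n,
    [/\ 0 <= ra n, 0 <= rb n, ra n ^+ 2 + rb n ^+ 2 = 1,
        inner (xr n) (zl n) = (ra n)%:C * expi (ta n) /\
        inner (xl n) (zl n) = (rb n)%:C * expi (tb n) &
        inner (xr n) (zr n) = - ((rb n)%:C * expi (td n - tb n)) /\
        inner (xl n) (zr n) = (ra n)%:C * expi (td n - ta n)].
Hypothesis phase_left1 : forall n, p (n + 1) + ta (n + 1) - (p n + lam) = 0.
Hypothesis phase_left2 :
  forall n, q (n + 1) + tb (n + 1) - (p n + lam) = by_region (n + 1) 0 mu1 0.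
Hypothesis phase_right1 :
  forall n, p n + (td n - tb n) - (q (n + 1) + lam) = by_region n mu3 mu2 0.
Hypothesis phase_right2 :
  forall n, q n + (td n - ta n) - (q (n + 1) + lam) = by_region n mu3 (mu1 + mu2) 0.

Let W n := gauge (xr n) (xl n) (p n) (q n).

Lemma gauge_zeta_left n : expi (- (p n + lam)) *: (W (n + 1) *m zl (n + 1)) =
  zeta_left (ra 1) (ra (-1)) (ra 0) mu1 (n + 1).
Proof.
have [_ rb_ge0 r1 [aE bE] _] := coin (n + 1).
rewrite gauge_mulmx aE bE zeta_leftE -(reg_ra (n + 1)) (sq_pythagoras rb_ge0 r1).
rewrite scale_col2 (expi_rotate (phase_left1 n)) expi0 mulr1.
by rewrite (expi_rotate (phase_left2 n)) mulrC.
Qed.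

Lemma gauge_zeta_right n : expi (- (q (n + 1) + lam)) *: (W n *m zr n) =
  zeta_right (ra 1) (ra (-1)) (ra 0) mu1 mu2 mu3 n.
Proof.
have [_ rb_ge0 r1 _ [cE eE]] := coin n.
rewrite gauge_mulmx cE eE zeta_rightE -(reg_ra n) (sq_pythagoras rb_ge0 r1).
rewrite scale_col2 mulrN mulrN (expi_rotate (phase_right1 n)).
by rewrite (expi_rotate (phase_right2 n)); congr (col2 (- _) _); apply: mulrC.
Qed.

Lemma gauge_walk n m : expi lam *: (W n *m U n m *m adj (W m)) =
  U_std (ra 1) (ra (-1)) (ra 0) mu1 mu2 mu3 n m.
Proof.
have [Wxr Wxl] := gauge_frame (p n) (q n) (hx n).
rewrite HU /U_std; case: eqP => [-> | _].
  by rewrite (ketbra_transport Wxr) -expiD -expiN gauge_zeta_left.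
case: eqP => [-> | _]; last by rewrite mulmx0 mul0mx scaler0.
by rewrite (ketbra_transport Wxl) -expiD -expiN -{1}(subrK 1 n) gauge_zeta_right.
Qed.

End Reduction.

Lemma two_phase_normal_form (U : blockop) (Phi : 'cV[Cx]_2) :
  two_phase_one_defect U -> unit_state Phi ->
  exists (rp rm r0 alpha mu1 mu2 mu3 theta : R),
    [/\ 0 <= rp <= 1, 0 <= rm <= 1, 0 <= r0 <= 1, 0 <= alpha <= 1 &
        unitary_equiv U Phi (U_std rp rm r0 mu1 mu2 mu3) (Phi_at alpha theta)].
Proof.
case=> _ [xr [xl [zl [zr [hx [hz [HU [[? [? [? [? Hp]]]] [? [? [? [? Hm]]]]]]]]]]]] hPhi.
have [reg_xr reg_xl reg_zl reg_zr] :
    [/\ regional xr, regional xl, regional zl & regional zr].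
  by split; apply: regional_constant; eexists => n;
    first [move/Hp | move/Hm] => -[? ? ? ?]; eassumption.
have [ra [rb [ta [tb [td [reg_ra reg_tb reg_td coin]]]]]] :=
  regional_transition_polar hx hz reg_xr reg_xl reg_zl reg_zr.
have [p [q [lam [mu1 [mu2 [mu3 [ph1 ph2 ph3 ph4]]]]]]] := gauge_phases ta reg_tb reg_td.
have [lam' [alpha [theta [alpha01 HPhi]]]] := gauge_unit_state (p 0) (q 0) (hx 0) hPhi.
have ra01 n : 0 <= ra n <= 1.
  by have [ra_ge0 _ r1 _ _] := coin n; exact: pythagoras_le1 ra_ge0 r1.
exists (ra 1), (ra (-1)), (ra 0), alpha, mu1, mu2, mu3, theta; split => //.
exists lam, lam', (fun n => gauge (xr n) (xl n) (p n) (q n)); split.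
  by move=> n; apply: gauge_unitary.
by split => // n m; apply: (gauge_walk hx HU reg_ra coin ph1 ph2 ph3 ph4).
Qed.

(** * Uniqueness of the standard form *)

Section StandardEquivalence.

Variables (rp rm r0 mu1 mu2 mu3 rp' rm' r0' mu1' mu2' mu3' lam : R).
Variable W : int -> 'M[Cx]_2.
Hypotheses (rp01 : 0 < rp < 1) (rm01 : 0 < rm < 1) (r001 : 0 < r0 < 1).
Hypotheses (rp01' : 0 < rp' < 1) (rm01' : 0 < rm' < 1) (r001' : 0 < r0' < 1).
Hypothesis W_unitary : forall n, unitary2 (W n).
Hypothesis W_equiv : forall n m,
  expi lam *: (W n *m U_std rp rm r0 mu1 mu2 mu3 n m *m adj (W m)) =
  U_std rp' rm' r0' mu1' mu2' mu3' n m.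

Local Notation E := (expi lam).
Local Notation zl := (zeta_left rp rm r0 mu1).
Local Notation zl' := (zeta_left rp' rm' r0' mu1').
Local Notation zr := (zeta_right rp rm r0 mu1 mu2 mu3).
Local Notation zr' := (zeta_right rp' rm' r0' mu1' mu2' mu3').

Lemma gauge_diag n : W n = mx2 (W n 0 0) 0 0 (W n 1 1).
Proof.
have /andP[rp_gt0 _] := rp01; have /andP[rm_gt0 _] := rm01.
have /andP[r0_gt0 _] := r001.
have E_neq0 : conjc E != 0 by rewrite conjc_eq0 expi_neq0.
have W10 : W n 1 0 = 0.
  have := W_equiv n (n + 1); rewrite !U_std_left ketbra_mulmx scale_ketbra.
  move=> /ketbra_support; have -> : W n 1 0 = (W n *m e1) 1 0.
    by rewrite mulmx_e1 mxE.
  apply; last by rewrite e1E mxE.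
  by rewrite scaler_eq0 negb_or E_neq0 unitary2_mulmx_neq0 ?zeta_left_neq0.
have W01 : W n 0 1 = 0.
  have := W_equiv n (n - 1); rewrite !U_std_right ketbra_mulmx scale_ketbra.
  move=> /ketbra_support; have -> : W n 0 1 = (W n *m e2) 0 0.
    by rewrite mulmx_e2 mxE.
  apply; last by rewrite e2E mxE.
  by rewrite scaler_eq0 negb_or E_neq0 unitary2_mulmx_neq0 ?zeta_right_neq0.
by rewrite {1}[W n]mx2E W10 W01.
Qed.

Lemma gauge_unimodular n : unimodular (W n 0 0) /\ unimodular (W n 1 1).
Proof.
have [WW _] := W_unitary n.
rewrite [W n]gauge_diag adj_mx2 mulmx2 scalar_mx2 conjc0 in WW.
by move: WW; rewrite !(mulr0, mul0r, addr0, add0r) => /mx2_inj[].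
Qed.

Lemma gauge_left n : conjc (W n 0 0 * E) *: (W (n + 1) *m zl (n + 1)) = zl' (n + 1).
Proof.
have := W_equiv n (n + 1); rewrite !U_std_left {1}[W n]gauge_diag.
by rewrite (ketbra_transport (diag_mulmx_e1 _ _)) => /(ketbra_injr e1_neq0).
Qed.

Lemma gauge_right n : conjc (W n 1 1 * E) *: (W (n - 1) *m zr (n - 1)) = zr' (n - 1).
Proof.
have := W_equiv n (n - 1); rewrite !U_std_right {1}[W n]gauge_diag.
by rewrite (ketbra_transport (diag_mulmx_e2 _ _)) => /(ketbra_injr e2_neq0).
Qed.

Let radius01 m : 0 < by_region m rp r0 rm < 1 :=
  @by_regionP _ (fun r => 0 < r < 1) m _ _ _ rp01 r001 rm01.
Let radius01' m : 0 < by_region m rp' r0' rm' < 1 :=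
  @by_regionP _ (fun r => 0 < r < 1) m _ _ _ rp01' r001' rm01'.
Let radius_gt0 m := proj1 (andP (radius01 m)).
Let radius_gt0' m := proj1 (andP (radius01' m)).
Let E_unimodular := expi_unimodular lam.

Lemma gauge_succ n : W (n + 1) 0 0 = W n 0 0 * E.
Proof.
have := gauge_left n; rewrite {1}[W (n + 1)]gauge_diag !zeta_leftE mulmx2_col2.
rewrite scale_col2 mul0r addr0 mulrA => /col2_inj[c0 _].
have uA := (gauge_unimodular n).1; have uA' := (gauge_unimodular (n + 1)).1.
have [g1 _] := unimodular_mul_pos (unimodularM (unimodularJ (unimodularM uA E_unimodular)) uA')
  (radius_gt0 _) (radius_gt0' _) c0.
by apply: unimodular_conj_eq (unimodularM uA E_unimodular) _; rewrite mulrC.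
Qed.

Lemma gauge_diag_eq m : m != 0 -> W m 1 1 = W m 0 0.
Proof.
move=> m_neq0; have chi0 mu : by_region m 0 mu 0 = 0 :> R.
  by rewrite /by_region (negPf m_neq0); case: ifP.
have := gauge_left (m - 1); rewrite subrK {1}[W m]gauge_diag !zeta_leftE mulmx2_col2.
rewrite scale_col2 !chi0 expi0 !mul1r !(mul0r, add0r) mulrA /sq => /col2_inj[_ c1].
have uA := (gauge_unimodular (m - 1)).1; have uB := (gauge_unimodular m).2.
have [g1 _] := unimodular_mul_pos (unimodularM (unimodularJ (unimodularM uA E_unimodular)) uB)
  (sq_gt0 (radius01 _)) (sq_gt0 (radius01' _)) c1.
rewrite -[in RHS](subrK 1 m) gauge_succ.
by apply: unimodular_conj_eq (unimodularM uA E_unimodular) _; rewrite mulrC.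
Qed.

Lemma gauge_right_step n : n <= 0 -> W (n - 1) 0 0 = W n 1 1 * E.
Proof.
move=> n_le0; have n1 : n - 1 <= -1 by lia.
have := gauge_right n; rewrite {1}[W (n - 1)]gauge_diag !zeta_rightE mulmx2_col2.
rewrite scale_col2 !(by_region_neg _ _ _ n1) expi0 !mul1r !(mul0r, addr0) !mulrN mulrA.
move=> /col2_inj[/eqP c0 _]; move: c0; rewrite eqr_opp /sq => /eqP c0.
have uA := (gauge_unimodular (n - 1)).1; have uB := (gauge_unimodular n).2.
have [g1 _] := unimodular_mul_pos (unimodularM (unimodularJ (unimodularM uB E_unimodular)) uA)
  (sq_gt0 rm01) (sq_gt0 rm01') c0.
by apply: unimodular_conj_eq (unimodularM uB E_unimodular) _; rewrite mulrC.
Qed.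

Lemma gauge_phase_sqr : E * E = 1.
Proof.
have h1 := gauge_right_step (n := -1) isT; rewrite gauge_diag_eq // in h1.
have h2 := gauge_succ (-1 - 1); rewrite subrK in h2.
apply: (mulfI (unimodular_neq0 (gauge_unimodular (-1 - 1)).1)).
by rewrite mulr1 mulrA -h2 -h1.
Qed.

Lemma gauge_scalar n : W n = (W n 0 0)%:M.
Proof.
rewrite {1}[W n]gauge_diag scalar_mx2; have [-> | n_neq0] := eqVneq n 0.
  have h1 := gauge_right_step (n := 0) (lexx _).
  have h2 := gauge_succ (0 - 1); rewrite subrK in h2.
  by rewrite h2 h1 -mulrA gauge_phase_sqr mulr1.
by rewrite gauge_diag_eq.
Qed.

Lemma gauge_trivial n m :
  U_std rp rm r0 mu1 mu2 mu3 n m = U_std rp' rm' r0' mu1' mu2' mu3' n m.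
Proof.
apply/esym; rewrite -W_equiv [W n]gauge_scalar [W m]gauge_scalar adj_scalar.
rewrite mul_scalar_mx mul_mx_scalar !scalerA.
have uA k : W k 0 0 * conjc (W k 0 0) = 1 := (gauge_unimodular k).1.
have uE : E * conjc E = 1 := E_unimodular.
rewrite /U_std; case: eqP => [-> | _].
  rewrite gauge_succ conjcM -[RHS]scale1r; congr (_ *: _).
  transitivity ((W n 0 0 * conjc (W n 0 0)) * (E * conjc E)); first by ring.
  by rewrite uA uE mulr1.
case: eqP => [-> | _]; last by rewrite !scaler0.
rewrite -{2}(subrK 1 n) gauge_succ -[RHS]scale1r; congr (_ *: _).
transitivity ((W (n - 1) 0 0 * conjc (W (n - 1) 0 0)) * (E * E)); first by ring.
by rewrite uA gauge_phase_sqr mulr1.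
Qed.

End StandardEquivalence.

Lemma U_std_inj rp rm r0 mu1 mu2 mu3 rp' rm' r0' mu1' mu2' mu3' :
  0 < rp < 1 -> 0 < r0 < 1 ->
  (forall n m, U_std rp rm r0 mu1 mu2 mu3 n m = U_std rp' rm' r0' mu1' mu2' mu3' n m) ->
  [/\ rp = rp', rm = rm', r0 = r0' &
      [/\ expi mu1 = expi mu1', expi mu2 = expi mu2' & expi mu3 = expi mu3']].
Proof.
move=> rp01 r001 U_eq.
have zl_eq m : zeta_left rp rm r0 mu1 m = zeta_left rp' rm' r0' mu1' m.
  apply: (ketbra_injr e1_neq0).
  by rewrite -(subrK 1 m) -(U_std_left _ _ _ _ mu2 mu3) U_eq U_std_left.
have zr_eq m : zeta_right rp rm r0 mu1 mu2 mu3 m = zeta_right rp' rm' r0' mu1' mu2' mu3' m.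
  by apply: (ketbra_injr e2_neq0); rewrite -(addrK 1 m) -U_std_right U_eq U_std_right.
move: (zl_eq 1) (zl_eq 0) (zl_eq (-1)) (zr_eq 0) (zr_eq 1).
rewrite !zeta_leftE !zeta_rightE /by_region /= !expi0 !mul1r.
move=> /col2_inj[[<-] _] /col2_inj[[<-] h1] /col2_inj[[<-] _] /col2_inj[/oppr_inj h2 _].
move=> /col2_inj[/oppr_inj h3 _].
split => //; split.
- by move/(mulIf (sq_neq0 r001)): h1.
- by move/(mulIf (sq_neq0 r001)): h2.
- by move/(mulIf (sq_neq0 rp01)): h3.
Qed.

Lemma Phi_at_inj g alpha theta alpha' theta' : unimodular g ->
  0 < alpha < 1 -> 0 < alpha' < 1 -> g *: Phi_at alpha theta = Phi_at alpha' theta' ->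
  alpha = alpha' /\ expi theta = expi theta'.
Proof.
move=> ug a01 /andP[a'_gt0 _]; have /andP[a_gt0 _] := a01.
rewrite /Phi_at e1E e2E !scale_col2 !add_col2 scale_col2 !(mulr0, mulr1, addr0, add0r).
move=> /col2_inj[c0 c1].
have [g1 aa'] := unimodular_mul_pos ug a_gt0 a'_gt0 c0; subst alpha'.
by rewrite g1 mul1r in c1; split => //; move/(mulIf (sq_neq0 a01)): c1.
Qed.

Lemma U_std_equiv_params rp rm r0 alpha mu1 mu2 mu3 theta
      rp' rm' r0' alpha' mu1' mu2' mu3' theta' :
  0 < rp < 1 -> 0 < rm < 1 -> 0 < r0 < 1 -> 0 < alpha < 1 ->
  0 < rp' < 1 -> 0 < rm' < 1 -> 0 < r0' < 1 -> 0 < alpha' < 1 ->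
  unitary_equiv (U_std rp rm r0 mu1 mu2 mu3) (Phi_at alpha theta)
                (U_std rp' rm' r0' mu1' mu2' mu3') (Phi_at alpha' theta') ->
  [/\ rp = rp', rm = rm', r0 = r0', alpha = alpha' &
      [/\ expi mu1 = expi mu1', expi mu2 = expi mu2', expi mu3 = expi mu3'
        & expi theta = expi theta']].
Proof.
move=> hp hm h0 ha hp' hm' h0' ha' [lam [lam' [W [W_unitary [W_equiv WPhi]]]]].
have [<- <- <- [-> -> ->]] :=
  U_std_inj hp h0 (gauge_trivial hp hm h0 hp' hm' h0' W_unitary W_equiv).
have uA := (gauge_unimodular hp hm h0 W_unitary W_equiv 0).1.
move: WPhi; rewrite (gauge_scalar hp hm h0 hp' hm' h0' W_unitary W_equiv 0).
rewrite mul_scalar_mx scalerA => /(Phi_at_inj (unimodularM (expi_unimodular lam') uA) ha ha').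
by case=> -> ->.
Qed.

Lemma unitary_equiv_refl U Phi : unitary_equiv U Phi U Phi.
Proof.
have adj1 : adj (1%:M : 'M[Cx]_2) = 1%:M by rewrite adj_scalar conjc1.
exists 0, 0, (fun _ => 1%:M); split; first by move=> n; rewrite /unitary2 adj1 mul1mx.
by split => [n m|]; rewrite expi0 scale1r ?adj1 mul1mx ?mulmx1.
Qed.

Theorem theorem3p2 :
  (forall (U : blockop) (Phi : 'cV[Cx]_2),
      two_phase_one_defect U -> unit_state Phi ->
      exists (rp rm r0 alpha mu1 mu2 mu3 theta : R),
        [/\ 0 <= rp <= 1, 0 <= rm <= 1, 0 <= r0 <= 1, 0 <= alpha <= 1 &
            unitary_equiv U Phi (U_std rp rm r0 mu1 mu2 mu3) (Phi_at alpha theta)])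
  /\
  (forall (rp rm r0 alpha mu1 mu2 mu3 theta
           rp' rm' r0' alpha' mu1' mu2' mu3' theta' : R),
      0 < rp < 1 -> 0 < rm < 1 -> 0 < r0 < 1 -> 0 < alpha < 1 ->
      0 < rp' < 1 -> 0 < rm' < 1 -> 0 < r0' < 1 -> 0 < alpha' < 1 ->
      0 <= mu1 < 2 * PI -> 0 <= mu2 < 2 * PI -> 0 <= mu3 < 2 * PI ->
      0 <= theta < 2 * PI ->
      0 <= mu1' < 2 * PI -> 0 <= mu2' < 2 * PI -> 0 <= mu3' < 2 * PI ->
      0 <= theta' < 2 * PI ->
      (unitary_equiv (U_std rp rm r0 mu1 mu2 mu3) (Phi_at alpha theta)
                     (U_std rp' rm' r0' mu1' mu2' mu3') (Phi_at alpha' theta')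
       <-> [/\ rp = rp', rm = rm', r0 = r0', alpha = alpha'
             & [/\ mu1 = mu1', mu2 = mu2', mu3 = mu3' & theta = theta']])).
Proof.
split; first exact: two_phase_normal_form.
move=> rp rm r0 alpha mu1 mu2 mu3 theta rp' rm' r0' alpha' mu1' mu2' mu3' theta'
  hp hm h0 ha hp' hm' h0' ha' *.
split => [equiv | [-> -> -> -> [-> -> -> ->]]]; last exact: unitary_equiv_refl.
have [-> -> -> -> [e_mu1 e_mu2 e_mu3 e_theta]] :=
  U_std_equiv_params hp hm h0 ha hp' hm' h0' ha' equiv.
by split => //; split; apply: expi_inj.
Qed.
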